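(* Let $H$ be a weak Hopf algebra, $A$ an algebra and $\pi\colon H\to A$ a linear map satisfying (PR1)–(PR5). Then the following are equivalent: (1) $\pi(h)=\pi(h_1)\pi(S(h_2))\pi(h_3)$ for all $h\in H$; (2) $\pi(1_1)\pi(S(1_2))=1_A$; (3) $\pi(S(1_1))\pi(1_2)=1_A$; (4) $\pi(S(h))=\pi(S(h_1))\pi(h_2)\pi(S(h_3))$ for all $h\in H$. Moreover, if the antipode $S$ is invertible, these are also equivalent to each of: (5) $\pi(h)=\pi(h_3)\pi(S^{-1}(h_2))\pi(h_1)$ for all $h\in H$; (6) $\pi(S^{-1}(1_2))\pi(1_1)=1_A$; (7) $\pi(1_2)\pi(S^{-1}(1_1))=1_A$.
   Context: All algebras are associative and unital over a field $\Bbbk$; Sweedler notation $\Delta(h)=h_1\otimes h_2$, $\Delta(1_H)=1_1\otimes1_2$. A weak Hopf algebra is $(H,m,u,\Delta,\varepsilon,S)$ with $H$ an algebra, $(H,\Delta,\varepsilon)$ a coalgebra, and for all $g,h,k$: $\Delta(kh)=\Delta(k)\Delta(h)$; $\varepsilon(kh_1)\varepsilon(h_2g)=\varepsilon(khg)=\varepsilon(kh_2)\varepsilon(h_1g)$; $(1\otimes\Delta(1))(\Delta(1)\otimes1)=\Delta^2(1)=(\Delta(1)\otimes1)(1\otimes\Delta(1))$; $h_1S(h_2)=\varepsilon(1_1h)1_2$; $S(h_1)h_2=1_1\varepsilon(h1_2)$; $S(h)=S(h_1)h_2S(h_3)$. Conditions, for all $h,k\in H$: (PR1) $\pi(1_H)=1_A$;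 (PR2) $\pi(h)\pi(k_1)\pi(S(k_2))=\pi(hk_1)\pi(S(k_2))$; (PR3) $\pi(h)\pi(S(k_1))\pi(k_2)=\pi(hS(k_1))\pi(k_2)$; (PR4) $\pi(h_1)\pi(S(h_2))\pi(k)=\pi(h_1)\pi(S(h_2)k)$; (PR5) $\pi(S(h_1))\pi(h_2)\pi(k)=\pi(S(h_1))\pi(h_2k)$. *)

(* Weak Hopf algebras over a field K, with tensors encoded
   by finite formal sums (seq of pairs) and equality in tensor powers
   expressed by the universal property (agreement under all multilinear
   maps into all K-vector spaces). *)
From HB Require Import structures.
From mathcomp Require Import all_boot all_order all_algebra.
Set Implicit Arguments. Unset Strict Implicit. Unset Printing Implicit Defensive.
Import GRing.Theory.
Local Open Scope ring_scope.

Section WHA.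
Variable K : fieldType.

Definition lin_map (U V : lmodType K) (f : U -> V) : Prop :=
  forall (a : K) (x y : U), f (a *: x + y) = a *: f x + f y.

Definition bilin (U V : lmodType K) (f : U -> U -> V) : Prop :=
  (forall y, lin_map (fun x => f x y)) /\ (forall x, lin_map (f x)).

Definition trilin (U V : lmodType K) (f : U -> U -> U -> V) : Prop :=
  (forall y z, lin_map (fun x => f x y z)) /\
  (forall x z, lin_map (fun y => f x y z)) /\
  (forall x y, lin_map (f x y)).

Variable H : algType K.
(* cop h : a formal sum  sum_i a_i (x) b_i  representing Delta(h) *)
Variable cop : H -> seq (H * H).

Definition sw2 (V : lmodType K) (f : H -> H -> V) (h : H) : V :=
  \sum_(p <- cop h) f p.1 p.2.

Definition sw3 (V : lmodType K) (f : H -> H -> H -> V) (h : H) : V :=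
  \sum_(p <- cop h) \sum_(q <- cop p.1) f q.1 q.2 p.2.

Record is_weak_hopf (eps : H -> K) (S : H -> H) : Prop := {
  wh_cop_lin : forall (V : lmodType K) (f : H -> H -> V), bilin f ->
     forall (a : K) (x y : H), sw2 f (a *: x + y) = a *: sw2 f x + sw2 f y;
  wh_eps_lin : forall (a : K) (x y : H), eps (a *: x + y) = a * eps x + eps y;
  wh_S_lin : lin_map S;
  wh_coassoc : forall (V : lmodType K) (f : H -> H -> H -> V), trilin f ->
     forall h, sw3 f h = \sum_(p <- cop h) \sum_(q <- cop p.2) f p.1 q.1 q.2;
  wh_counit_l : forall h, \sum_(p <- cop h) eps p.1 *: p.2 = h;
  wh_counit_r : forall h, \sum_(p <- cop h) eps p.2 *: p.1 = h;
  wh_cop_mul : forall (V : lmodType K) (f : H -> H -> V), bilin f ->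
     forall x y, sw2 f (x * y) =
       \sum_(p <- cop x) \sum_(q <- cop y) f (p.1 * q.1) (p.2 * q.2);
  wh_eps_l : forall x h g,
     \sum_(p <- cop h) eps (x * p.1) * eps (p.2 * g) = eps (x * h * g);
  wh_eps_r : forall x h g,
     \sum_(p <- cop h) eps (x * p.2) * eps (p.1 * g) = eps (x * h * g);
  (* (1 (x) Delta(1))(Delta(1) (x) 1) = Delta^2(1) = (Delta(1) (x) 1)(1 (x) Delta(1)) *)
  wh_unit_l : forall (V : lmodType K) (f : H -> H -> H -> V), trilin f ->
     \sum_(p <- cop 1) \sum_(q <- cop 1) f p.1 (q.1 * p.2) q.2 = sw3 f 1;
  wh_unit_r : forall (V : lmodType K) (f : H -> H -> H -> V), trilin f ->
     sw3 f 1 = \sum_(p <- cop 1) \sum_(q <- cop 1) f p.1 (p.2 * q.1) q.2;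
  wh_S_tgt : forall h,
     \sum_(p <- cop h) p.1 * S p.2 = \sum_(p <- cop 1) eps (p.1 * h) *: p.2;
  wh_S_src : forall h,
     \sum_(p <- cop h) S p.1 * p.2 = \sum_(p <- cop 1) eps (h * p.2) *: p.1;
  wh_S_S : forall h, S h = sw3 (fun x y z => S x * y * S z) h
}.

Variable A : algType K.
Variables (eps : H -> K) (S : H -> H) (pi : H -> A).

Definition PR1 : Prop := pi 1 = 1.
Definition PR2 : Prop := forall h x,
  \sum_(p <- cop x) pi h * pi p.1 * pi (S p.2) = \sum_(p <- cop x) pi (h * p.1) * pi (S p.2).
Definition PR3 : Prop := forall h x,
  \sum_(p <- cop x) pi h * pi (S p.1) * pi p.2 = \sum_(p <- cop x) pi (h * S p.1) * pi p.2.
Definition PR4 : Prop := forall h x,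
  \sum_(p <- cop h) pi p.1 * pi (S p.2) * pi x = \sum_(p <- cop h) pi p.1 * pi (S p.2 * x).
Definition PR5 : Prop := forall h x,
  \sum_(p <- cop h) pi (S p.1) * pi p.2 * pi x = \sum_(p <- cop h) pi (S p.1) * pi (p.2 * x).

End WHA.

(* Put e := π(1_1)π(S 1_2) and f := π(S 1_1)π(1_2), and let ε_t, ε_s be the target and
   source counital maps.  By (PR4), resp. (PR3), and the weak Hopf identities
   h_1 ⊗ ε_s(h_2) = h 1_1 ⊗ S(1_2) and ε_t(h_1) ⊗ h_2 = S(1_1) ⊗ 1_2 h, followed by (PR2),
   resp. (PR5), one gets π(h_1)π(S h_2)π(h_3) = π(h) e = f π(h); since π(1) = 1 this gives
   (1) ⇔ (2) ⇔ (3).  If e = 1, then π(z) = π(z 1_1)π(S 1_2) together with (PR2) yields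
   π(u)π(1_2) = π(u 1_2) against the first leg of Δ(1) weighted by any linear form, and
   S(h) = S(h_1) ε_t(h_2) turns this into (4); conversely (4) at h = 1 gives f = 1 because
   S(1) = 1 and 1_1 ⊗ ε_t(1_2) = Δ(1).  Finally S is an anti-algebra and anti-coalgebra map,
   Δ(S h) = S(h_2) ⊗ S(h_1) and S(1_1) ⊗ S(1_2) = 1_2 ⊗ 1_1, so for invertible S the
   conditions (5), (6), (7) are (4), (2), (3) read through S^-1. *)

From HB Require Import structures.
From mathcomp Require Import all_boot all_order all_algebra.
Import GRing.Theory.
Local Open Scope ring_scope.

Set Implicit Arguments. Unset Strict Implicit. Unset Printing Implicit Defensive.

Section LinearMaps.
Variable K : fieldType.

Definition lin_form (U : lmodType K) (c : U -> K) : Prop :=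
  forall (a : K) (x y : U), c (a *: x + y) = a * c x + c y.

Section Basics.
Variables (U V : lmodType K) (f : U -> V).
Hypothesis f_lin : lin_map f.

Lemma lin_map0 : f 0 = 0.
Proof.
have := f_lin 1 0 0; rewrite scaler0 add0r scale1r.
by move/(congr1 (fun z => z - f 0)); rewrite subrr addrK => ->.
Qed.

Lemma lin_mapD x y : f (x + y) = f x + f y.
Proof. by have := f_lin 1 x y; rewrite !scale1r. Qed.

Lemma lin_mapZ a x : f (a *: x) = a *: f x.
Proof. by have := f_lin a x 0; rewrite !addr0 lin_map0 addr0. Qed.

Lemma lin_map_sum (I : Type) (s : seq I) (F : I -> U) :
  f (\sum_(i <- s) F i) = \sum_(i <- s) f (F i).
Proof. exact: (big_morph f lin_mapD lin_map0). Qed.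

End Basics.

Lemma lin_map_id (U : lmodType K) : lin_map (fun x : U => x).
Proof. by []. Qed.

Lemma lin_map_comp (U V X : lmodType K) (g : V -> X) (f : U -> V) :
  lin_map g -> lin_map f -> lin_map (fun x => g (f x)).
Proof. by move=> hg hf a x y; rewrite hf hg. Qed.

Lemma lin_map_add (U V : lmodType K) (f g : U -> V) :
  lin_map f -> lin_map g -> lin_map (fun x => f x + g x).
Proof.
move=> hf hg a x y; rewrite hf hg scalerDr.
by rewrite -!addrA; congr (_ + _); rewrite addrCA.
Qed.

Lemma lin_map_big (U V : lmodType K) (I : Type) (s : seq I) (F : I -> U -> V) :
  (forall i, lin_map (F i)) -> lin_map (fun x => \sum_(i <- s) F i x).
Proof.
move=> hF a x y; rewrite scaler_sumr -big_split /=.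
by apply: eq_bigr => i _; rewrite hF.
Qed.

Lemma lin_map_scalel (U V : lmodType K) (k : K) (f : U -> V) :
  lin_map f -> lin_map (fun x => k *: f x).
Proof. by move=> hf a x y; rewrite hf scalerDr !scalerA mulrC. Qed.

Lemma lin_map_scaler (U V : lmodType K) (c : U -> K) (v : V) :
  lin_form c -> lin_map (fun x => c x *: v).
Proof. by move=> hc a x y; rewrite hc scalerDl scalerA. Qed.

Lemma lin_map_mulr (U : lmodType K) (R : algType K) (f : U -> R) (r : R) :
  lin_map f -> lin_map (fun x => f x * r).
Proof. by move=> hf a x y; rewrite hf mulrDl scalerAl. Qed.

Lemma lin_map_mull (U : lmodType K) (R : algType K) (f : U -> R) (r : R) :
  lin_map f -> lin_map (fun x => r * f x).
Proof. by move=> hf a x y; rewrite hf mulrDr scalerAr. Qed.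

Lemma lin_map_can (U V : lmodType K) (f : U -> V) (g : V -> U) :
  lin_map f -> cancel f g -> cancel g f -> lin_map g.
Proof. by move=> hf fK gK a x y; apply: (can_inj fK); rewrite hf !gK. Qed.

Lemma lin_form_comp (U V : lmodType K) (c : V -> K) (f : U -> V) :
  lin_form c -> lin_map f -> lin_form (fun x => c (f x)).
Proof. by move=> hc hf a x y; rewrite hf hc. Qed.

Lemma lin_form_mulr (U : lmodType K) (c : U -> K) (k : K) :
  lin_form c -> lin_form (fun x => c x * k).
Proof. by move=> hc a x y; rewrite hc mulrDl mulrA. Qed.

Lemma lin_form_mull (U : lmodType K) (c : U -> K) (k : K) :
  lin_form c -> lin_form (fun x => k * c x).
Proof. by move=> hc a x y; rewrite hc mulrDr mulrCA. Qed.

Section Multilinear.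
Variables (U V : lmodType K) (g : U -> U) (u w : U).

Lemma bilin_linl (f : U -> U -> V) : bilin f -> lin_map g -> lin_map (fun x => f (g x) u).
Proof. by case=> fl _; apply: lin_map_comp (fl u). Qed.

Lemma bilin_linr (f : U -> U -> V) : bilin f -> lin_map g -> lin_map (fun x => f u (g x)).
Proof. by case=> _ fr; apply: lin_map_comp (fr u). Qed.

Lemma trilin_lin1 (f : U -> U -> U -> V) :
  trilin f -> lin_map g -> lin_map (fun x => f (g x) u w).
Proof. by case=> f1 _; apply: lin_map_comp (f1 u w). Qed.

Lemma trilin_lin2 (f : U -> U -> U -> V) :
  trilin f -> lin_map g -> lin_map (fun x => f u (g x) w).
Proof. by case=> _ [f2 _]; apply: lin_map_comp (f2 u w). Qed.

Lemma trilin_lin3 (f : U -> U -> U -> V) :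
  trilin f -> lin_map g -> lin_map (fun x => f u w (g x)).
Proof. by case=> _ [_ f3]; apply: lin_map_comp (f3 u w). Qed.

End Multilinear.

Section Bilinear.
Variables (U V : lmodType K) (f : U -> U -> V).
Hypothesis f_bilin : bilin f.

Lemma bilin_suml y (I : Type) (s : seq I) (F : I -> U) :
  f (\sum_(i <- s) F i) y = \sum_(i <- s) f (F i) y.
Proof. exact: (lin_map_sum (f_bilin.1 y)). Qed.

Lemma bilin_sumr x (I : Type) (s : seq I) (F : I -> U) :
  f x (\sum_(i <- s) F i) = \sum_(i <- s) f x (F i).
Proof. exact: (lin_map_sum (f_bilin.2 x)). Qed.

Lemma bilinZl a x y : f (a *: x) y = a *: f x y.
Proof. exact: (lin_mapZ (f_bilin.1 y)). Qed.

Lemma bilinZr a x y : f x (a *: y) = a *: f x y.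
Proof. exact: (lin_mapZ (f_bilin.2 x)). Qed.

End Bilinear.

End LinearMaps.

Section WeakHopf.
Variables (K : fieldType) (H : algType K) (cop : H -> seq (H * H))
  (eps : H -> K) (S : H -> H).
Hypothesis W : is_weak_hopf cop eps S.

Lemma lin_map_cop_sum (U V : lmodType K) (G : H * H -> V) (F : U -> H) :
  (forall b, lin_map (fun a => G (a, b))) -> (forall a, lin_map (fun b => G (a, b))) ->
  lin_map F -> lin_map (fun x => \sum_(q <- cop (F x)) G q).
Proof.
move=> G1 G2 hF a x y; rewrite hF.
have G_eta z : \sum_(p <- cop z) G (p.1, p.2) = \sum_(p <- cop z) G p.
  by apply: eq_bigr => -[].
have G_bilin : bilin (fun a b => G (a, b)) by split.
by have := wh_cop_lin W G_bilin a (F x) (F y); rewrite /sw2 !G_eta.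
Qed.

Definition eps_t (h : H) : H := \sum_(p <- cop 1) eps (p.1 * h) *: p.2.
Definition eps_s (h : H) : H := \sum_(p <- cop 1) eps (h * p.2) *: p.1.

Lemma lin_map_eps_t : lin_map eps_t.
Proof.
apply: lin_map_big => p; apply: lin_map_scaler.
exact: lin_form_comp (wh_eps_lin W) (lin_map_mull _ (@lin_map_id _ _)).
Qed.

Lemma lin_map_eps_s : lin_map eps_s.
Proof.
apply: lin_map_big => p; apply: lin_map_scaler.
exact: lin_form_comp (wh_eps_lin W) (lin_map_mulr _ (@lin_map_id _ _)).
Qed.

Ltac lin_atom :=
  first [ exact: (wh_S_lin W) | exact: lin_map_eps_t | exact: lin_map_eps_s | eassumption ].

Ltac lin_tac := cbn [fst snd]; first
  [ exact: lin_map_id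
  | apply: lin_map_big => ?; lin_tac
  | apply: lin_map_cop_sum; [ move=> ?; lin_tac | move=> ?; lin_tac | lin_tac ]
  | apply: lin_map_add; lin_tac
  | apply: lin_map_scalel; lin_tac
  | apply: lin_map_scaler; lin_form_tac
  | apply: lin_map_mulr; lin_tac
  | apply: lin_map_mull; lin_tac
  | apply: bilin_linl; [ eassumption | lin_tac ]
  | apply: bilin_linr; [ eassumption | lin_tac ]
  | apply: trilin_lin1; [ eassumption | lin_tac ]
  | apply: trilin_lin2; [ eassumption | lin_tac ]
  | apply: trilin_lin3; [ eassumption | lin_tac ]
  | apply: lin_map_comp; [ lin_atom | lin_tac ] ]
with lin_form_tac := cbn [fst snd]; first
  [ apply: lin_form_mulr; lin_form_tac
  | apply: lin_form_mull; lin_form_tac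
  | apply: lin_form_comp; [ first [ exact: (wh_eps_lin W) | eassumption ] | lin_tac ] ].

Ltac bilin_tac := split => ?; lin_tac.
Ltac trilin_tac := split; [| split]; move=> ? ?; lin_tac.

Lemma lin_map_sw2 (V : lmodType K) (f : H -> H -> V) :
  bilin f -> lin_map (fun x => \sum_(p <- cop x) f p.1 p.2).
Proof. by move=> hf; lin_tac. Qed.

Lemma coassoc (V : lmodType K) (f : H -> H -> H -> V) : trilin f -> forall h,
  \sum_(p <- cop h) \sum_(q <- cop p.1) f q.1 q.2 p.2 =
  \sum_(p <- cop h) \sum_(q <- cop p.2) f p.1 q.1 q.2.
Proof. by move=> hf h; exact: (wh_coassoc W hf h). Qed.

Lemma cop2_one_l (V : lmodType K) (f : H -> H -> H -> V) : trilin f ->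
  \sum_(p <- cop 1) \sum_(q <- cop 1) f p.1 (q.1 * p.2) q.2 =
  \sum_(p <- cop 1) \sum_(q <- cop p.1) f q.1 q.2 p.2.
Proof. by move=> hf; exact: (wh_unit_l W hf). Qed.

Lemma cop2_one_r (V : lmodType K) (f : H -> H -> H -> V) : trilin f ->
  \sum_(p <- cop 1) \sum_(q <- cop p.1) f q.1 q.2 p.2 =
  \sum_(p <- cop 1) \sum_(q <- cop 1) f p.1 (p.2 * q.1) q.2.
Proof. by move=> hf; exact: (wh_unit_r W hf). Qed.

Lemma cop_mul (V : lmodType K) (f : H -> H -> V) : bilin f -> forall x y,
  \sum_(p <- cop (x * y)) f p.1 p.2 =
  \sum_(p <- cop x) \sum_(q <- cop y) f (p.1 * q.1) (p.2 * q.2).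
Proof. by move=> hf x y; exact: (wh_cop_mul W hf x y). Qed.

Lemma cop_mulr1 (V : lmodType K) (f : H -> H -> V) : bilin f -> forall x,
  \sum_(p <- cop x) \sum_(q <- cop 1) f (p.1 * q.1) (p.2 * q.2) = \sum_(p <- cop x) f p.1 p.2.
Proof. by move=> hf x; rewrite -cop_mul // mulr1. Qed.

Lemma cop_mul1r (V : lmodType K) (f : H -> H -> V) : bilin f -> forall x,
  \sum_(p <- cop 1) \sum_(q <- cop x) f (p.1 * q.1) (p.2 * q.2) = \sum_(p <- cop x) f p.1 p.2.
Proof. by move=> hf x; rewrite -cop_mul // mul1r. Qed.

Lemma cop1_eps_mid (V : lmodType K) (f : H -> H -> V) : bilin f ->
  \sum_(p <- cop 1) \sum_(q <- cop 1) eps (q.1 * p.2) *: f p.1 q.2 =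
  \sum_(p <- cop 1) f p.1 p.2.
Proof.
move=> hf; rewrite (cop2_one_l (f := fun a b c => eps b *: f a c)); last by trilin_tac.
apply: eq_bigr => p _ /=; rewrite -{2}(wh_counit_r W p.1) (bilin_suml hf).
by apply: eq_bigr => q _; rewrite (bilinZl hf).
Qed.

Lemma cop1_eps_t_r (V : lmodType K) (f : H -> H -> V) : bilin f ->
  \sum_(p <- cop 1) f p.1 (eps_t p.2) = \sum_(p <- cop 1) f p.1 p.2.
Proof.
move=> hf; rewrite -(cop1_eps_mid hf).
apply: eq_bigr => p _; rewrite /eps_t (bilin_sumr hf); apply: eq_bigr => q _.
by rewrite (bilinZr hf).
Qed.

Lemma cop1_eps_s_l (V : lmodType K) (f : H -> H -> V) : bilin f ->
  \sum_(p <- cop 1) f (eps_s p.1) p.2 = \sum_(p <- cop 1) f p.1 p.2.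
Proof.
move=> hf; rewrite -(cop1_eps_mid hf) exchange_big.
apply: eq_bigr => p _; rewrite /eps_s (bilin_suml hf); apply: eq_bigr => q _.
by rewrite (bilinZl hf).
Qed.

Lemma antipode_eps_s z : S z = \sum_(r <- cop z) eps_s r.1 * S r.2.
Proof.
rewrite (wh_S_S W z) /sw3; apply: eq_bigr => r _.
by rewrite /eps_s -(wh_S_src W) mulr_suml.
Qed.

Lemma antipode_eps_t z : S z = \sum_(r <- cop z) S r.1 * eps_t r.2.
Proof.
rewrite (wh_S_S W z) /sw3 (coassoc (f := fun x y z => S x * y * S z)); last by trilin_tac.
apply: eq_bigr => r _ /=; rewrite /eps_t -(wh_S_tgt W) mulr_sumr.
by apply: eq_bigr => q _; rewrite mulrA.
Qed.

Lemma cop1_antipode_r (V : lmodType K) (f : H -> H -> V) : bilin f ->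
  \sum_(p <- cop 1) f p.1 (S p.2) = \sum_(p <- cop 1) f p.1 (eps_s p.2).
Proof.
move=> hf.
transitivity (\sum_(p <- cop 1) \sum_(r <- cop p.2) f p.1 (S r.1 * eps_t r.2)).
  by apply: eq_bigr => p _; rewrite {1}(antipode_eps_t p.2) (bilin_sumr hf).
rewrite -(coassoc (f := fun a b c => f a (S b * eps_t c))); last by trilin_tac.
rewrite -(cop2_one_l (f := fun a b c => f a (S b * eps_t c))); last by trilin_tac.
rewrite /= exchange_big.
rewrite (cop1_eps_t_r (f := fun u v => \sum_(p <- cop 1) f p.1 (S (u * p.2) * v)));
  last by bilin_tac.
rewrite /= exchange_big.
rewrite (cop2_one_l (f := fun a b c => f a (S b * c))); last by trilin_tac.
rewrite (coassoc (f := fun a b c => f a (S b * c))); last by trilin_tac.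
by apply: eq_bigr => p _ /=; rewrite /eps_s -(wh_S_src W) (bilin_sumr hf).
Qed.

Lemma cop1_antipode_l (V : lmodType K) (f : H -> H -> V) : bilin f ->
  \sum_(p <- cop 1) f (S p.1) p.2 = \sum_(p <- cop 1) f (eps_t p.1) p.2.
Proof.
move=> hf.
transitivity (\sum_(p <- cop 1) \sum_(r <- cop p.1) f (eps_s r.1 * S r.2) p.2).
  by apply: eq_bigr => p _; rewrite {1}(antipode_eps_s p.1) (bilin_suml hf).
rewrite -(cop2_one_l (f := fun a b c => f (eps_s a * S b) c)); last by trilin_tac.
rewrite /= (cop1_eps_s_l (f := fun u v => \sum_(q <- cop 1) f (u * S (q.1 * v)) q.2));
  last by bilin_tac.
rewrite /= (cop2_one_l (f := fun a b c => f (a * S b) c)); last by trilin_tac.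
by apply: eq_bigr => p _ /=; rewrite /eps_t -(wh_S_tgt W) (bilin_suml hf).
Qed.

Lemma antipode1 : S 1 = 1.
Proof.
have eps_r_bilin : bilin (fun a b : H => eps b *: a) by bilin_tac.
rewrite -{1}(wh_counit_r W 1) (lin_map_sum (wh_S_lin W)).
under eq_bigr do rewrite (lin_mapZ (wh_S_lin W)).
rewrite (cop1_antipode_l eps_r_bilin).
under eq_bigr do rewrite -(lin_mapZ lin_map_eps_t).
rewrite -(lin_map_sum lin_map_eps_t) (wh_counit_r W) /eps_t.
by under eq_bigr do rewrite mulr1; exact: (wh_counit_l W).
Qed.

Lemma cop_eps_s_l (V : lmodType K) (f : H -> H -> V) : bilin f -> forall x,
  \sum_(p <- cop x) f (eps_s p.1) p.2 = \sum_(q <- cop 1) f q.1 (x * q.2).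
Proof.
move=> hf x; symmetry.
transitivity (\sum_(q <- cop 1) \sum_(r <- cop (x * q.2)) eps r.1 *: f q.1 r.2).
  apply: eq_bigr => q _; rewrite -{1}(wh_counit_l W (x * q.2)) (bilin_sumr hf).
  by apply: eq_bigr => r _; rewrite (bilinZr hf).
transitivity (\sum_(q <- cop 1) \sum_(r <- cop q.2)
  (fun a b c => \sum_(s <- cop x) eps (s.1 * b) *: f a (s.2 * c)) q.1 r.1 r.2).
  apply: eq_bigr => q _ /=.
  rewrite (cop_mul (f := fun a b => eps a *: f q.1 b)); last by bilin_tac.
  by rewrite exchange_big.
rewrite -(coassoc (f := fun a b c => \sum_(s <- cop x) eps (s.1 * b) *: f a (s.2 * c)));
  last by trilin_tac.
rewrite -(cop2_one_l (f := fun a b c => \sum_(s <- cop x) eps (s.1 * b) *: f a (s.2 * c)));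
  last by trilin_tac.
transitivity (\sum_(s <- cop x) \sum_(q <- cop 1)
  (fun u v => \sum_(p <- cop 1) eps (u * p.2) *: f p.1 v) (s.1 * q.1) (s.2 * q.2)).
  rewrite /= [LHS]exchange_big [RHS]exchange_big; apply: eq_bigr => q _.
  rewrite [RHS]exchange_big; apply: eq_bigr => p _.
  by apply: eq_bigr => s _; rewrite mulrA.
rewrite (cop_mulr1 (f := fun u v => \sum_(p <- cop 1) eps (u * p.2) *: f p.1 v));
  last by bilin_tac.
apply: eq_bigr => s _ /=; rewrite /eps_s (bilin_suml hf); apply: eq_bigr => p _.
by rewrite (bilinZl hf).
Qed.

Lemma cop_eps_s_r (V : lmodType K) (f : H -> H -> V) : bilin f -> forall x,
  \sum_(p <- cop x) f p.1 (eps_s p.2) = \sum_(q <- cop 1) f (x * q.1) (S q.2).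
Proof.
move=> hf x; symmetry.
rewrite (cop1_antipode_r (f := fun a b => f (x * a) b)); last by bilin_tac.
transitivity (\sum_(q <- cop 1) \sum_(s <- cop (x * q.1)) eps s.2 *: f s.1 (eps_s q.2)).
  apply: eq_bigr => q _; rewrite -{1}(wh_counit_r W (x * q.1)) (bilin_suml hf).
  by apply: eq_bigr => s _; rewrite (bilinZl hf).
transitivity (\sum_(q <- cop 1) \sum_(s <- cop q.1)
  (fun a b c => \sum_(t <- cop x) eps (t.2 * b) *: f (t.1 * a) (eps_s c)) s.1 s.2 q.2).
  apply: eq_bigr => q _ /=.
  rewrite (cop_mul (f := fun a b => eps b *: f a (eps_s q.2))); last by bilin_tac.
  by rewrite exchange_big.
rewrite (coassoc (f := fun a b c => \sum_(t <- cop x) eps (t.2 * b) *: f (t.1 * a) (eps_s c)));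
  last by trilin_tac.
transitivity (\sum_(t <- cop x) \sum_(p <- cop 1)
  (fun a b => \sum_(u <- cop 1) eps (b * u.2) *: f a u.1) (t.1 * p.1) (t.2 * p.2)).
  rewrite /= exchange_big; apply: eq_bigr => p _.
  rewrite exchange_big; apply: eq_bigr => t _.
  transitivity (\sum_(u <- cop 1)
      (\sum_(r <- cop p.2) eps (t.2 * r.1) * eps (r.2 * u.2)) *: f (t.1 * p.1) u.1).
    under eq_bigr => r _ do rewrite /eps_s (bilin_sumr hf) scaler_sumr.
    rewrite exchange_big; apply: eq_bigr => u _; rewrite scaler_suml.
    by apply: eq_bigr => r _; rewrite (bilinZr hf) scalerA.
  by apply: eq_bigr => u _; rewrite (wh_eps_l W).
rewrite (cop_mulr1 (f := fun a b => \sum_(u <- cop 1) eps (b * u.2) *: f a u.1));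
  last by bilin_tac.
apply: eq_bigr => t _ /=; rewrite /eps_s (bilin_sumr hf); apply: eq_bigr => u _.
by rewrite (bilinZr hf).
Qed.

Lemma cop_eps_t_l (V : lmodType K) (f : H -> H -> V) : bilin f -> forall x,
  \sum_(p <- cop x) f (eps_t p.1) p.2 = \sum_(q <- cop 1) f (S q.1) (q.2 * x).
Proof.
move=> hf x; symmetry.
rewrite (cop1_antipode_l (f := fun a b => f a (b * x))); last by bilin_tac.
transitivity (\sum_(q <- cop 1) \sum_(s <- cop (q.2 * x)) eps s.1 *: f (eps_t q.1) s.2).
  apply: eq_bigr => q _; rewrite -{1}(wh_counit_l W (q.2 * x)) (bilin_sumr hf).
  by apply: eq_bigr => s _; rewrite (bilinZr hf).
transitivity (\sum_(q <- cop 1) \sum_(r <- cop q.2)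
  (fun a b c => \sum_(t <- cop x) eps (b * t.1) *: f (eps_t a) (c * t.2)) q.1 r.1 r.2).
  apply: eq_bigr => q _ /=.
  by rewrite (cop_mul (f := fun a b => eps a *: f (eps_t q.1) b)); last by bilin_tac.
rewrite -(coassoc (f := fun a b c => \sum_(t <- cop x) eps (b * t.1) *: f (eps_t a) (c * t.2)));
  last by trilin_tac.
transitivity (\sum_(p <- cop 1) \sum_(t <- cop x)
  (fun a b => \sum_(u <- cop 1) eps (u.1 * a) *: f u.2 b) (p.1 * t.1) (p.2 * t.2)).
  apply: eq_bigr => p _ /=; rewrite exchange_big; apply: eq_bigr => t _.
  under eq_bigr => r _ do rewrite /eps_t (bilin_suml hf) scaler_sumr.
  rewrite exchange_big; apply: eq_bigr => u _.
  transitivity ((\sum_(r <- cop p.1) eps (u.1 * r.1) * eps (r.2 * t.1)) *: f u.2 (p.2 * t.2)).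
    by rewrite scaler_suml; apply: eq_bigr => r _; rewrite (bilinZl hf) scalerA mulrC.
  by rewrite (wh_eps_l W) mulrA.
rewrite (cop_mul1r (f := fun a b => \sum_(u <- cop 1) eps (u.1 * a) *: f u.2 b));
  last by bilin_tac.
apply: eq_bigr => t _ /=; rewrite /eps_t (bilin_suml hf); apply: eq_bigr => u _.
by rewrite (bilinZl hf).
Qed.

Lemma cop1_antipode (V : lmodType K) (f : H -> H -> V) : bilin f ->
  \sum_(p <- cop 1) f (S p.1) (S p.2) = \sum_(p <- cop 1) f p.2 p.1.
Proof.
move=> hf.
rewrite (cop1_antipode_l (f := fun a b => f a (S b))); last by bilin_tac.
rewrite (cop1_antipode_r (f := fun a b => f (eps_t a) b)); last by bilin_tac.
transitivity (\sum_(q <- cop 1) \sum_(r <- cop 1) eps (q.1 * r.2) *: f q.2 r.1).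
  transitivity (\sum_(p <- cop 1) \sum_(q <- cop 1) \sum_(r <- cop 1)
     (eps (q.1 * p.1) * eps (p.2 * r.2)) *: f q.2 r.1).
    apply: eq_bigr => p _; rewrite /eps_t /eps_s (bilin_suml hf); apply: eq_bigr => q _.
    rewrite (bilinZl hf) (bilin_sumr hf) scaler_sumr; apply: eq_bigr => r _.
    by rewrite (bilinZr hf) scalerA.
  rewrite exchange_big; apply: eq_bigr => q _; rewrite exchange_big.
  by apply: eq_bigr => r _; rewrite -scaler_suml (wh_eps_l W) mulr1.
transitivity (\sum_(q <- cop 1) f q.2 (eps_s q.1)).
  apply: eq_bigr => q _; rewrite /eps_s (bilin_sumr hf).
  by apply: eq_bigr => r _; rewrite (bilinZr hf).
by rewrite (cop1_eps_s_l (f := fun a b => f b a)); last by bilin_tac.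
Qed.

Lemma cop_eps_s (V : lmodType K) (f : H -> H -> V) : bilin f -> forall y,
  \sum_(u <- cop (eps_s y)) f u.1 u.2 = \sum_(q <- cop 1) f q.1 (eps_s y * q.2).
Proof.
move=> hf y.
transitivity (\sum_(p <- cop 1) \sum_(r <- cop p.1)
   (fun a b c => eps (y * c) *: f a b) r.1 r.2 p.2).
  rewrite /eps_s (lin_map_sum (lin_map_sw2 hf)); apply: eq_bigr => p _.
  by rewrite (lin_mapZ (lin_map_sw2 hf)) scaler_sumr.
rewrite -(cop2_one_l (f := fun a b c => eps (y * c) *: f a b)); last by trilin_tac.
apply: eq_bigr => p _ /=; rewrite /eps_s mulr_suml (bilin_sumr hf).
by apply: eq_bigr => q _; rewrite -scalerAl (bilinZr hf).
Qed.

Lemma cop_eps_t (V : lmodType K) (f : H -> H -> V) : bilin f -> forall y,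
  \sum_(u <- cop (eps_t y)) f u.1 u.2 = \sum_(q <- cop 1) f (eps_t y * q.1) q.2.
Proof.
move=> hf y.
transitivity (\sum_(p <- cop 1) \sum_(r <- cop p.2)
   (fun a b c => eps (a * y) *: f b c) p.1 r.1 r.2).
  rewrite /eps_t (lin_map_sum (lin_map_sw2 hf)); apply: eq_bigr => p _.
  by rewrite (lin_mapZ (lin_map_sw2 hf)) scaler_sumr.
rewrite -(coassoc (f := fun a b c => eps (a * y) *: f b c)); last by trilin_tac.
rewrite (cop2_one_r (f := fun a b c => eps (a * y) *: f b c)); last by trilin_tac.
rewrite /= exchange_big; apply: eq_bigr => q _.
rewrite /eps_t mulr_suml (bilin_suml hf).
by apply: eq_bigr => p _; rewrite -scalerAl (bilinZl hf).
Qed.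

Lemma cop1_cop_mulr (V : lmodType K) (f : H -> H -> H -> V) : trilin f -> forall x,
  \sum_(u <- cop 1) \sum_(r <- cop (x * u.2)) f u.1 r.1 r.2 =
  \sum_(u <- cop 1) \sum_(r <- cop x) f u.1 (r.1 * u.2) r.2.
Proof.
move=> hf x.
transitivity (\sum_(u <- cop 1) \sum_(t <- cop u.2)
  (fun a b c => \sum_(s <- cop x) f a (s.1 * b) (s.2 * c)) u.1 t.1 t.2).
  apply: eq_bigr => u _ /=.
  rewrite (cop_mul (f := fun b c => f u.1 b c)); last by bilin_tac.
  exact: exchange_big.
rewrite -(coassoc (f := fun a b c => \sum_(s <- cop x) f a (s.1 * b) (s.2 * c)));
  last by trilin_tac.
rewrite -(cop2_one_l (f := fun a b c => \sum_(s <- cop x) f a (s.1 * b) (s.2 * c)));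
  last by trilin_tac.
apply: eq_bigr => p _ /=; rewrite exchange_big.
rewrite -(cop_mulr1 (f := fun a b => f p.1 (a * p.2) b)); last by bilin_tac.
by apply: eq_bigr => s _; apply: eq_bigr => q _; rewrite mulrA.
Qed.

Lemma cop1_cop_mull (V : lmodType K) (f : H -> H -> H -> V) : trilin f -> forall y,
  \sum_(u <- cop 1) \sum_(r <- cop (u.1 * y)) f r.1 r.2 u.2 =
  \sum_(u <- cop 1) \sum_(r <- cop y) f r.1 (u.1 * r.2) u.2.
Proof.
move=> hf y.
transitivity (\sum_(u <- cop 1) \sum_(t <- cop u.1)
  (fun a b c => \sum_(s <- cop y) f (a * s.1) (b * s.2) c) t.1 t.2 u.2).
  apply: eq_bigr => u _ /=.
  by rewrite (cop_mul (f := fun a b => f a b u.2)); last by bilin_tac.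
rewrite -(cop2_one_l (f := fun a b c => \sum_(s <- cop y) f (a * s.1) (b * s.2) c));
  last by trilin_tac.
transitivity (\sum_(p <- cop 1) \sum_(s <- cop y)
  (fun a b => \sum_(q <- cop 1) f a (q.1 * b) q.2) (p.1 * s.1) (p.2 * s.2)).
  apply: eq_bigr => p _ /=; rewrite exchange_big; apply: eq_bigr => s _.
  by apply: eq_bigr => q _; rewrite mulrA.
rewrite (cop_mul1r (f := fun a b => \sum_(q <- cop 1) f a (q.1 * b) q.2)); last by bilin_tac.
by rewrite /= exchange_big.
Qed.

Lemma eps_t_mul x y : \sum_(r <- cop x) r.1 * eps_t y * S r.2 = eps_t (x * y).
Proof.
transitivity (\sum_(u <- cop 1) \sum_(r <- cop x)
  (fun a b c => eps (a * y) *: (b * S c)) u.1 (r.1 * u.2) r.2).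
  rewrite /= /eps_t; under eq_bigr do rewrite mulr_sumr mulr_suml.
  rewrite exchange_big; apply: eq_bigr => u _; apply: eq_bigr => r _.
  by rewrite -scalerAr -scalerAl ?mulrA.
rewrite -(cop1_cop_mulr (f := fun a b c => eps (a * y) *: (b * S c))); last by trilin_tac.
transitivity (\sum_(u <- cop 1) eps (u.1 * y) *: eps_t (x * u.2)).
  by apply: eq_bigr => u _; rewrite /eps_t -(wh_S_tgt W) scaler_sumr.
rewrite /eps_t.
transitivity (\sum_(v <- cop 1)
    (\sum_(u <- cop 1) eps (v.1 * x * u.2) * eps (u.1 * y)) *: v.2).
  under eq_bigr do rewrite scaler_sumr.
  rewrite exchange_big; apply: eq_bigr => v _; rewrite scaler_suml.
  by apply: eq_bigr => u _; rewrite scalerA mulrC mulrA.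
by apply: eq_bigr => v _; rewrite (wh_eps_r W) mulr1 mulrA.
Qed.

Lemma eps_s_mul x y : \sum_(q <- cop y) S q.1 * eps_s x * q.2 = eps_s (x * y).
Proof.
transitivity (\sum_(u <- cop 1) \sum_(q <- cop y)
  (fun a b c => eps (x * c) *: (S a * b)) q.1 (u.1 * q.2) u.2).
  rewrite /= /eps_s; under eq_bigr do rewrite mulr_sumr mulr_suml.
  rewrite exchange_big; apply: eq_bigr => u _; apply: eq_bigr => q _.
  by rewrite -scalerAr -scalerAl ?mulrA.
rewrite -(cop1_cop_mull (f := fun a b c => eps (x * c) *: (S a * b))); last by trilin_tac.
transitivity (\sum_(u <- cop 1) eps (x * u.2) *: eps_s (u.1 * y)).
  by apply: eq_bigr => u _; rewrite /eps_s -(wh_S_src W) scaler_sumr.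
rewrite /eps_s.
transitivity (\sum_(v <- cop 1)
    (\sum_(u <- cop 1) eps (x * u.2) * eps (u.1 * (y * v.2))) *: v.1).
  under eq_bigr do rewrite scaler_sumr.
  rewrite exchange_big; apply: eq_bigr => v _; rewrite scaler_suml.
  by apply: eq_bigr => u _; rewrite scalerA !mulrA.
by apply: eq_bigr => v _; rewrite (wh_eps_r W) mulr1 mulrA.
Qed.

Lemma eps_s_eps_t_comm x y : eps_s x * eps_t y = eps_t y * eps_s x.
Proof.
have hf : trilin (fun a b c => eps (a * y) *: (eps (x * c) *: b)) by trilin_tac.
transitivity (\sum_(p <- cop 1) \sum_(q <- cop 1)
  (fun a b c => eps (a * y) *: (eps (x * c) *: b)) p.1 (q.1 * p.2) q.2).
  rewrite /= /eps_s /eps_t mulr_suml [RHS]exchange_big; apply: eq_bigr => q _.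
  rewrite mulr_sumr; apply: eq_bigr => p _.
  by rewrite -scalerAl -scalerAr scalerA mulrC -scalerA.
rewrite (cop2_one_l hf) (cop2_one_r hf) /= /eps_s /eps_t mulr_suml.
apply: eq_bigr => p _; rewrite mulr_sumr.
by apply: eq_bigr => q _; rewrite -scalerAl -scalerAr.
Qed.

Lemma antipode_mul_eps_s x y :
  S (x * y) = \sum_(p <- cop x) \sum_(q <- cop y) eps_s (p.1 * q.1) * S q.2 * S p.2.
Proof.
rewrite (antipode_eps_t (x * y)) (cop_mul (f := fun a b => S a * eps_t b)); last by bilin_tac.
transitivity (\sum_(p <- cop x) \sum_(r <- cop p.2)
  (fun a b c => \sum_(q <- cop y) \sum_(t <- cop q.2)
      S (a * q.1) * b * t.1 * S t.2 * S c) p.1 r.1 r.2).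
  apply: eq_bigr => p _ /=.
  under eq_bigr => q _ do rewrite -eps_t_mul mulr_sumr.
  rewrite exchange_big; apply: eq_bigr => r _; apply: eq_bigr => q _.
  rewrite /eps_t -(wh_S_tgt W) mulr_sumr mulr_suml mulr_sumr.
  by apply: eq_bigr => t _; rewrite !mulrA.
rewrite -(coassoc (f := fun a b c => \sum_(q <- cop y) \sum_(t <- cop q.2)
      S (a * q.1) * b * t.1 * S t.2 * S c)); last by trilin_tac.
apply: eq_bigr => p _ /=.
transitivity (\sum_(r <- cop p.1) \sum_(q <- cop y) \sum_(t <- cop q.1)
   S (r.1 * t.1) * r.2 * t.2 * S q.2 * S p.2).
  apply: eq_bigr => r _.
  by rewrite -(coassoc (f := fun a b c => S (r.1 * a) * r.2 * b * S c * S p.2));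
    last by trilin_tac.
rewrite exchange_big; apply: eq_bigr => q _.
rewrite /eps_s -(wh_S_src W) (cop_mul (f := fun a b => S a * b)); last by bilin_tac.
rewrite !mulr_suml; apply: eq_bigr => r _; rewrite !mulr_suml; apply: eq_bigr => t _.
by rewrite !mulrA.
Qed.

Lemma antipodeM x y : S (x * y) = S y * S x.
Proof.
rewrite antipode_mul_eps_s.
transitivity (\sum_(p <- cop x) \sum_(q <- cop y) S q.1 * eps_s p.1 * eps_t q.2 * S p.2).
  apply: eq_bigr => p _.
  transitivity (\sum_(q <- cop y) \sum_(t <- cop q.1)
      S t.1 * eps_s p.1 * t.2 * S q.2 * S p.2).
    by apply: eq_bigr => q _; rewrite -eps_s_mul !mulr_suml.
  rewrite (coassoc (f := fun a b c => S a * eps_s p.1 * b * S c * S p.2)); last by trilin_tac.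
  apply: eq_bigr => q _ /=; rewrite /eps_t -(wh_S_tgt W) mulr_sumr mulr_suml.
  by apply: eq_bigr => t _; rewrite !mulrA.
transitivity (\sum_(p <- cop x) \sum_(q <- cop y) S q.1 * eps_t q.2 * (eps_s p.1 * S p.2)).
  apply: eq_bigr => p _; apply: eq_bigr => q _.
  by rewrite -[S q.1 * eps_s p.1 * eps_t q.2]mulrA eps_s_eps_t_comm !mulrA.
rewrite exchange_big (antipode_eps_t y) (antipode_eps_s x) mulr_suml.
by apply: eq_bigr => q _; rewrite mulr_sumr.
Qed.

Lemma cop_eps_s_antipode (V : lmodType K) (f : H -> H -> V) : bilin f -> forall y,
  \sum_(r <- cop y) \sum_(s <- cop r.1) \sum_(w <- cop r.2) f (S s.2 * w.1) (S s.1 * w.2) =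
  \sum_(u <- cop (eps_s y)) f u.1 u.2.
Proof.
move=> hf y.
rewrite (coassoc (f := fun a b c => \sum_(w <- cop c) f (S b * w.1) (S a * w.2)));
  last by trilin_tac.
transitivity (\sum_(r <- cop y) \sum_(s <- cop r.2) f (eps_s s.1) (S r.1 * s.2)).
  apply: eq_bigr => r _ /=.
  rewrite -(coassoc (f := fun a b c => f (S a * b) (S r.1 * c))); last by trilin_tac.
  by apply: eq_bigr => s _ /=; rewrite /eps_s -(wh_S_src W) (bilin_suml hf).
transitivity (\sum_(r <- cop y) \sum_(q <- cop 1) f q.1 (S r.1 * (r.2 * q.2))).
  apply: eq_bigr => r _.
  by rewrite (cop_eps_s_l (f := fun a b => f a (S r.1 * b))); last by bilin_tac.
rewrite exchange_big (cop_eps_s hf); apply: eq_bigr => q _.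
rewrite /eps_s -(wh_S_src W) mulr_suml (bilin_sumr hf).
by apply: eq_bigr => r _; rewrite mulrA.
Qed.

Lemma cop_antipode_cop1 (V : lmodType K) (f : H -> H -> V) : bilin f -> forall h,
  \sum_(u <- cop (S h)) f u.1 u.2 =
  \sum_(p <- cop h) \sum_(q <- cop 1) f (S p.2 * q.1) (S p.1 * q.2).
Proof.
move=> hf h.
rewrite {1}(antipode_eps_s h) (lin_map_sum (lin_map_sw2 hf)).
transitivity (\sum_(p <- cop h) \sum_(r <- cop p.1) \sum_(s <- cop r.1) \sum_(w <- cop r.2)
   \sum_(t <- cop (S p.2)) f (S s.2 * w.1 * t.1) (S s.1 * w.2 * t.2)).
  apply: eq_bigr => p _; rewrite (cop_mul hf).
  by rewrite -(cop_eps_s_antipode (f := fun a b => \sum_(t <- cop (S p.2)) f (a * t.1) (b * t.2)));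
    last by bilin_tac.
transitivity (\sum_(p <- cop h) \sum_(r <- cop p.1)
  (fun a b c => \sum_(s <- cop a) \sum_(v <- cop (b * S c))
       f (S s.2 * v.1) (S s.1 * v.2)) r.1 r.2 p.2).
  apply: eq_bigr => p _; apply: eq_bigr => r _ /=; apply: eq_bigr => s _.
  rewrite (cop_mul (f := fun a b => f (S s.2 * a) (S s.1 * b))); last by bilin_tac.
  by apply: eq_bigr => w _; apply: eq_bigr => t _; rewrite !mulrA.
rewrite (coassoc (f := fun a b c => \sum_(s <- cop a) \sum_(v <- cop (b * S c))
       f (S s.2 * v.1) (S s.1 * v.2))); last by trilin_tac.
transitivity (\sum_(p <- cop h) \sum_(s <- cop p.1) \sum_(v <- cop (eps_t p.2))
   f (S s.2 * v.1) (S s.1 * v.2)).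
  apply: eq_bigr => p _ /=; rewrite exchange_big; apply: eq_bigr => s _.
  have hg : bilin (fun a b => f (S s.2 * a) (S s.1 * b)) by bilin_tac.
  by rewrite /eps_t -(wh_S_tgt W) (lin_map_sum (lin_map_sw2 hg)).
transitivity (\sum_(p <- cop h) \sum_(s <- cop p.1)
  (fun a b c => \sum_(q <- cop 1) f (S b * eps_t c * q.1) (S a * q.2)) s.1 s.2 p.2).
  apply: eq_bigr => p _; apply: eq_bigr => s _ /=.
  rewrite (cop_eps_t (f := fun a b => f (S s.2 * a) (S s.1 * b))); last by bilin_tac.
  by apply: eq_bigr => q _; rewrite mulrA.
rewrite (coassoc (f := fun a b c => \sum_(q <- cop 1) f (S b * eps_t c * q.1) (S a * q.2)));
  last by trilin_tac.
apply: eq_bigr => p _ /=; rewrite exchange_big; apply: eq_bigr => q _.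
by rewrite (antipode_eps_t p.2) mulr_suml (bilin_suml hf).
Qed.

Lemma cop_antipode (V : lmodType K) (f : H -> H -> V) : bilin f -> forall h,
  \sum_(u <- cop (S h)) f u.1 u.2 = \sum_(p <- cop h) f (S p.2) (S p.1).
Proof.
move=> hf h; rewrite (cop_antipode_cop1 hf).
transitivity (\sum_(p <- cop h) \sum_(q <- cop 1) f (S (q.2 * p.2)) (S (q.1 * p.1))).
  apply: eq_bigr => p _.
  rewrite -(cop1_antipode (f := fun a b => f (S p.2 * b) (S p.1 * a))); last by bilin_tac.
  by apply: eq_bigr => q _ /=; rewrite !antipodeM.
have hg : bilin (fun a b => f (S b) (S a)) by bilin_tac.
by rewrite exchange_big (cop_mul1r hg).
Qed.

Lemma cop2_antipode (V : lmodType K) (f : H -> H -> H -> V) : trilin f -> forall h,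
  sw3 cop f (S h) = sw3 cop (fun x y z => f (S z) (S y) (S x)) h.
Proof.
move=> hf h; rewrite /sw3.
rewrite (cop_antipode (f := fun a b => \sum_(q <- cop a) f q.1 q.2 b)); last by bilin_tac.
rewrite (coassoc (f := fun x y z => f (S z) (S y) (S x))); last by trilin_tac.
apply: eq_bigr => p _ /=.
by rewrite (cop_antipode (f := fun a b => f a b (S p.1))) //; bilin_tac.
Qed.


Section Representation.
Variables (A : algType K) (pi : H -> A).
Hypotheses (pi_lin : lin_map pi) (pr1 : PR1 pi) (pr2 : PR2 cop S pi) (pr3 : PR3 cop S pi)
  (pr4 : PR4 cop S pi) (pr5 : PR5 cop S pi).

Definition pi_unit_t : A := \sum_(p <- cop 1) pi p.1 * pi (S p.2).
Definition pi_unit_s : A := \sum_(p <- cop 1) pi (S p.1) * pi p.2.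

Definition pi_triple (h : H) : A := sw3 cop (fun x y z => pi x * pi (S y) * pi z) h.
Definition pi_S_triple (h : H) : A := sw3 cop (fun x y z => pi (S x) * pi y * pi (S z)) h.

Definition pi_regular : Prop := forall h, pi h = pi_triple h.
Definition pi_S_regular : Prop := forall h, pi (S h) = pi_S_triple h.

Lemma pi_tripleE_unit_t h : pi_triple h = pi h * pi_unit_t.
Proof.
rewrite /pi_triple /sw3.
transitivity (\sum_(p <- cop h) \sum_(q <- cop p.1) pi q.1 * pi (S q.2 * p.2)).
  by apply: eq_bigr => p _; exact: pr4.
rewrite (coassoc (f := fun x y z => pi x * pi (S y * z))); last by trilin_tac.
transitivity (\sum_(p <- cop h) pi p.1 * pi (eps_s p.2)).
  apply: eq_bigr => p _ /=.
  by rewrite /eps_s -(wh_S_src W) (lin_map_sum pi_lin) mulr_sumr.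
rewrite (cop_eps_s_r (f := fun u v => pi u * pi v)); last by bilin_tac.
rewrite /= -pr2 /pi_unit_t mulr_sumr; apply: eq_bigr => q _.
by rewrite mulrA.
Qed.

Lemma pi_tripleE_unit_s h : pi_triple h = pi_unit_s * pi h.
Proof.
rewrite /pi_triple /sw3 (coassoc (f := fun x y z => pi x * pi (S y) * pi z));
  last by trilin_tac.
transitivity (\sum_(p <- cop h) \sum_(q <- cop p.2) pi (p.1 * S q.1) * pi q.2).
  by apply: eq_bigr => p _; exact: pr3.
rewrite -(coassoc (f := fun x y z => pi (x * S y) * pi z)); last by trilin_tac.
transitivity (\sum_(p <- cop h) pi (eps_t p.1) * pi p.2).
  apply: eq_bigr => p _ /=.
  by rewrite /eps_t -(wh_S_tgt W) (lin_map_sum pi_lin) mulr_suml.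
rewrite (cop_eps_t_l (f := fun u v => pi u * pi v)); last by bilin_tac.
by rewrite /= -pr5 /pi_unit_s mulr_suml.
Qed.

Lemma pi_S_tripleE h : pi_S_triple h = \sum_(p <- cop h) pi (S p.1) * pi (eps_t p.2).
Proof.
rewrite /pi_S_triple /sw3.
transitivity (\sum_(p <- cop h) \sum_(q <- cop p.1) pi (S q.1) * pi (q.2 * S p.2)).
  by apply: eq_bigr => p _; exact: pr5.
rewrite (coassoc (f := fun x y z => pi (S x) * pi (y * S z))); last by trilin_tac.
apply: eq_bigr => p _ /=.
by rewrite /eps_t -(wh_S_tgt W) (lin_map_sum pi_lin) mulr_sumr.
Qed.

Section UnitT.
Hypothesis unit_t1 : pi_unit_t = 1.

Lemma pi_cop1_expand z : pi z = \sum_(r <- cop 1) pi (z * r.1) * pi (S r.2).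
Proof.
rewrite -pr2; transitivity (pi z * pi_unit_t); first by rewrite unit_t1 mulr1.
by rewrite /pi_unit_t mulr_sumr; apply: eq_bigr => r _; rewrite mulrA.
Qed.

Lemma pi_mul_cop1 u (c : H -> K) : lin_form c ->
  \sum_(q <- cop 1) c q.1 *: (pi u * pi q.2) = \sum_(q <- cop 1) c q.1 *: pi (u * q.2).
Proof.
move=> hc.
pose F a b d := c a *: (pi u * pi b * pi (S d)).
pose G a b d := c a *: (pi (u * b) * pi (S d)).
have F_trilin : trilin F by rewrite /F; trilin_tac.
have G_trilin : trilin G by rewrite /G; trilin_tac.
transitivity (\sum_(q <- cop 1) \sum_(r <- cop 1) F q.1 (q.2 * r.1) r.2).
  apply: eq_bigr => q _; rewrite {1}(pi_cop1_expand q.2) mulr_sumr scaler_sumr.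
  by apply: eq_bigr => r _; rewrite /F mulrA.
rewrite -(cop2_one_r F_trilin) (coassoc F_trilin).
transitivity (\sum_(q <- cop 1) \sum_(r <- cop q.2) G q.1 r.1 r.2).
  by apply: eq_bigr => q _; rewrite /F /G -!scaler_sumr pr2.
rewrite -(coassoc G_trilin) (cop2_one_r G_trilin).
apply: eq_bigr => q _; rewrite (pi_cop1_expand (u * q.2)) scaler_sumr.
by apply: eq_bigr => r _; rewrite /G mulrA.
Qed.

Lemma pi_S_regular_of_unit_t : pi_S_regular.
Proof.
move=> h; rewrite pi_S_tripleE.
transitivity (\sum_(p <- cop h) \sum_(q <- cop 1) eps (q.1 * p.2) *: pi (S p.1 * q.2)).
  rewrite (antipode_eps_t h) (lin_map_sum pi_lin); apply: eq_bigr => p _.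
  rewrite /eps_t mulr_sumr (lin_map_sum pi_lin); apply: eq_bigr => q _.
  by rewrite -scalerAr (lin_mapZ pi_lin).
apply: eq_bigr => p _.
rewrite -(pi_mul_cop1 (S p.1) (c := fun a => eps (a * p.2))); last by lin_form_tac.
rewrite /eps_t (lin_map_sum pi_lin) mulr_sumr; apply: eq_bigr => q _.
by rewrite (lin_mapZ pi_lin) scalerAr.
Qed.

End UnitT.

Lemma pi_regular_iff_unit_t : pi_regular <-> pi_unit_t = 1.
Proof.
split=> [reg | unit_t1 h]; last by rewrite pi_tripleE_unit_t unit_t1 mulr1.
by have := reg 1; rewrite pi_tripleE_unit_t pr1 mul1r => <-.
Qed.

Lemma pi_regular_iff_unit_s : pi_regular <-> pi_unit_s = 1.
Proof.
split=> [reg | unit_s1 h]; last by rewrite pi_tripleE_unit_s unit_s1 mul1r.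
by have := reg 1; rewrite pi_tripleE_unit_s pr1 mulr1 => <-.
Qed.

Lemma pi_unit_s_of_S_regular : pi_S_regular -> pi_unit_s = 1.
Proof.
move=> Sreg; have := Sreg 1; rewrite antipode1 pr1 pi_S_tripleE => ->.
by rewrite (cop1_eps_t_r (f := fun u v => pi (S u) * pi v)) //; bilin_tac.
Qed.

Lemma pi_regular_iff_S_regular : pi_regular <-> pi_S_regular.
Proof.
split=> [/pi_regular_iff_unit_t | /pi_unit_s_of_S_regular /pi_regular_iff_unit_s //].
exact: pi_S_regular_of_unit_t.
Qed.

Section InverseAntipode.
Variable Sinv : H -> H.
Hypotheses (SK : cancel S Sinv) (SinvK : cancel Sinv S).
(* Used through [eassumption] by [bilin_tac] and [trilin_tac]. *)
Let Sinv_lin : lin_map Sinv := lin_map_can (wh_S_lin W) SK SinvK.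

Definition pi_Sinv_regular : Prop :=
  forall h, pi h = sw3 cop (fun x y z => pi z * pi (Sinv y) * pi x) h.

Lemma pi_S_regular_iff_Sinv_regular : pi_S_regular <-> pi_Sinv_regular.
Proof.
have sw3_S h : sw3 cop (fun x y z => pi z * pi (Sinv y) * pi x) (S h) = pi_S_triple h.
  rewrite cop2_antipode; last by trilin_tac.
  by apply: eq_bigr => p _; apply: eq_bigr => q _ /=; rewrite SK.
split=> [Sreg h | Sinv_reg h]; last by rewrite Sinv_reg sw3_S.
by rewrite -(SinvK h) Sreg sw3_S.
Qed.

Lemma pi_unit_t_Sinv : \sum_(p <- cop 1) pi (Sinv p.2) * pi p.1 = pi_unit_t.
Proof.
rewrite -(cop1_antipode (f := fun u v => pi (Sinv u) * pi v)); last by bilin_tac.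
by apply: eq_bigr => p _ /=; rewrite SK.
Qed.

Lemma pi_unit_s_Sinv : \sum_(p <- cop 1) pi p.2 * pi (Sinv p.1) = pi_unit_s.
Proof.
rewrite -(cop1_antipode (f := fun u v => pi u * pi (Sinv v))); last by bilin_tac.
by apply: eq_bigr => p _ /=; rewrite SK.
Qed.

End InverseAntipode.

End Representation.

End WeakHopf.


Theorem proposition3p2 (K : fieldType) (H : algType K) (cop : H -> seq (H * H))
  (eps : H -> K) (S : H -> H) (A : algType K) (pi : H -> A) :
  is_weak_hopf cop eps S ->
  lin_map pi ->
  PR1 pi -> PR2 cop S pi -> PR3 cop S pi -> PR4 cop S pi -> PR5 cop S pi ->
  let P1 := forall h, pi h = sw3 cop (fun x y z => pi x * pi (S y) * pi z) h in
  let P2 := \sum_(p <- cop 1) pi p.1 * pi (S p.2) = 1 in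
  let P3 := \sum_(p <- cop 1) pi (S p.1) * pi p.2 = 1 in
  let P4 := forall h, pi (S h) = sw3 cop (fun x y z => pi (S x) * pi y * pi (S z)) h in
  ((P1 <-> P2) /\ (P1 <-> P3) /\ (P1 <-> P4)) /\
  (forall Sinv : H -> H, cancel S Sinv -> cancel Sinv S ->
    let P5 := forall h, pi h = sw3 cop (fun x y z => pi z * pi (Sinv y) * pi x) h in
    let P6 := \sum_(p <- cop 1) pi (Sinv p.2) * pi p.1 = 1 in
    let P7 := \sum_(p <- cop 1) pi p.2 * pi (Sinv p.1) = 1 in
    (P1 <-> P5) /\ (P1 <-> P6) /\ (P1 <-> P7)).
Proof.
move=> W pi_lin pr1 pr2 pr3 pr4 pr5; cbv zeta.
have reg_t := pi_regular_iff_unit_t W pi_lin pr1 pr2 pr4.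
have reg_s := pi_regular_iff_unit_s W pi_lin pr1 pr3 pr5.
have reg_S := pi_regular_iff_S_regular W pi_lin pr1 pr2 pr3 pr4 pr5.
split=> [// | Sinv SK SinvK].
rewrite (pi_unit_t_Sinv W pi_lin SK SinvK) (pi_unit_s_Sinv W pi_lin SK SinvK).
split=> //; exact: iff_trans reg_S (pi_S_regular_iff_Sinv_regular W pi_lin SK SinvK).
Qed.
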